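(* Let $V$ be a finite-dimensional vector space over $\mathbb{F}_q$, let $\mathcal{F}=\{\langle f_1\rangle,\dots,\langle f_\nu\rangle\}$ be a projective point family in $V$, and let $\varphi:\mathbb{F}_q^\nu\to V$ be a parent function of $\mathcal{F}$. Endow $\mathbb{F}_q^\nu$ with the Hamming weight. Then $\operatorname{wt}_{\mathcal{F}}=\operatorname{wt}_{\mathrm{quot},\varphi}$, and the parent code $\ker(\varphi)$ has minimum Hamming distance $d_H(\ker\varphi)=\min_{x,y\in\ker\varphi,\,x\neq y}d_H(x,y)\ge 3$.
   Context: A projective point family is a set of pairwise linearly independent nonzero vectors (equivalently, distinct $1$-dimensional subspaces) $\mathcal{F}$ in $V$, with projective weight $\operatorname{wt}_{\mathcal{F}}(x)=\min(\{|I|:I\subseteq\mathcal{F},\ x\in\langle I\rangle\}\cup\{\infty\})$. A parent function of $\mathcal{F}$ is a linear map $\varphi:\mathbb{F}_q^\nu\to V$ such that $\{\langle\varphi(e_i)\rangle: i=1,\dots,\nu\}=\mathcal{F}$, where $e_i$ are the standard basis vectors; $\ker\varphi$ is a parent code. For a linear map $\psi:(X,\operatorname{wt}_X)\to Y$, $\operatorname{wt}_{\mathrm{quot},\psi}(y)=\min\{\operatorname{wt}_X(w):w\in\psi^{-1}(y)\}$, and $\infty$ if $\psi^{-1}(y)=\emptyset$. *)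

From HB Require Import structures.
From mathcomp Require Import all_boot all_order all_algebra.
Set Implicit Arguments. Unset Strict Implicit. Unset Printing Implicit Defensive.
Import GRing.Theory.
Local Open Scope ring_scope.

(* Minimum of c over {S | P S} in a finite type, None standing for +infinity
   (minimum of the empty set). *)
Definition min_opt (T : finType) (P : pred T) (c : T -> nat) : option nat :=
  if [pick A | P A && [forall B, P B ==> (c A <= c B)%N]] is Some A
  then Some (c A) else None.

Section Defs.
Variables (F : finFieldType) (V : vectType F).

Definition proj_point_family (fam : seq {vspace V}) : bool :=
  uniq fam && all (fun U => \dim U == 1%N) fam.

Definition span_sub (fam : seq {vspace V}) (S : {set 'I_(size fam)}) : {vspace V} :=
  (\sum_(i in S) nth 0%VS fam i)%VS.

Definition wtF (fam : seq {vspace V}) (x : V) : option nat :=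
  min_opt (fun S : {set 'I_(size fam)} => x \in span_sub S) (fun S => #|S|).

Definition hamming_wt (nu : nat) (w : 'rV[F]_nu) : nat := #|[set i | w 0 i != 0]|.
Definition hamming_dist (nu : nat) (x y : 'rV[F]_nu) : nat :=
  #|[set i | x 0 i != y 0 i]|.

Definition wt_quot (nu : nat) (psi : 'rV[F]_nu -> V) (y : V) : option nat :=
  min_opt (fun w => psi w == y) (@hamming_wt nu).

Definition parent_function (nu : nat) (fam : seq {vspace V})
  (phi : 'rV[F]_nu -> V) : Prop :=
  forall U : {vspace V}, (U \in fam) <-> exists i : 'I_nu, U = <[phi (delta_mx ord0 i)]>%VS.

End Defs.

From HB Require Import structures.
From mathcomp Require Import all_boot all_order all_algebra perm.
(* Because fam consists of exactly nu distinct lines and these are the lines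
   <phi e_i>, the members of fam and the standard basis vectors correspond by
   a permutation.  Hence both weights of x equal the least number of lines
   <phi e_i> whose span contains x: a vector in the span of the lines indexed
   by S is the image of a vector supported on S, and conversely.  A nonzero
   kernel vector of Hamming weight 1 or 2 would force some phi e_i to vanish or
   two of these lines to coincide. *)

Set Implicit Arguments. Unset Strict Implicit. Unset Printing Implicit Defensive.
Import GRing.Theory.
Local Open Scope ring_scope.

Lemma min_optP (T : finType) (P : pred T) (c : T -> nat) :
  (min_opt P c = None -> forall A, ~~ P A) /\
  (forall m, min_opt P c = Some m ->
     exists A, [/\ P A, c A = m & forall B, P B -> (m <= c B)%N]).
Proof.
rewrite /min_opt; case: pickP => [A /andP[PA /forallP mA]|noA].
  by split=> // m [<-]; exists A; split=> // B PB; exact: (implyP (mA B)).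
split=> // _ A; apply/negP=> PA.
have [B PB mB] := arg_minnP c PA.
move: (noA B); rewrite PB /= => /negbT/forallPn[C].
by rewrite negb_imply => /andP[PC]; rewrite mB.
Qed.

Lemma min_opt_eq (T1 T2 : finType) (P1 : pred T1) (c1 : T1 -> nat)
    (P2 : pred T2) (c2 : T2 -> nat) :
  (forall A, P1 A -> exists2 B, P2 B & (c2 B <= c1 A)%N) ->
  (forall B, P2 B -> exists2 A, P1 A & (c1 A <= c2 B)%N) ->
  min_opt P1 c1 = min_opt P2 c2.
Proof.
move=> dom12 dom21.
have [none1 some1] := min_optP P1 c1; have [none2 some2] := min_optP P2 c2.
case E1: (min_opt P1 c1) => [m1|]; case E2: (min_opt P2 c2) => [m2|] //.
- have [A [PA <- minA]] := some1 _ E1; have [B [PB <- minB]] := some2 _ E2.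
  have [B' PB' leB'] := dom12 _ PA; have [A' PA' leA'] := dom21 _ PB.
  congr Some; apply/eqP; rewrite eqn_leq.
  by rewrite (leq_trans (minA _ PA') leA') (leq_trans (minB _ PB') leB').
- have [A [PA _ _]] := some1 _ E1; have [B PB _] := dom12 _ PA.
  by have := none2 E2 B; rewrite PB.
- have [B [PB _ _]] := some2 _ E2; have [A PA _] := dom21 _ PB.
  by have := none1 E1 A; rewrite PA.
Qed.

Lemma line_eq_of_lin_dep (K : fieldType) (vT : vectType K) (a b : K) (u v : vT) :
  a != 0 -> b != 0 -> a *: u + b *: v = 0 -> <[u]>%VS = <[v]>%VS.
Proof.
move=> a0 b0 dep.
have in_line (c d : K) (x y : vT) : c != 0 -> c *: x + d *: y = 0 -> x \in <[y]>%VS.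
  move=> c0 /eqP; rewrite addr_eq0 => /eqP cx.
  by rewrite -[x]scale1r -(mulVf c0) -scalerA cx memvZ // memvN memvZ // memv_line.
apply/eqP; rewrite eqEsubv -!memvE (in_line a b) //=.
by apply: (in_line b a) => //; rewrite addrC.
Qed.

Section HammingWeight.
Variables (F : finFieldType) (n : nat).

Definition row_supp (w : 'rV[F]_n) : {set 'I_n} := [set i | w 0 i != 0].

Lemma hamming_wtE (w : 'rV[F]_n) : hamming_wt w = #|row_supp w|.
Proof. by []. Qed.

Lemma hamming_distE (x y : 'rV[F]_n) : hamming_dist x y = hamming_wt (x - y).
Proof. by apply: eq_card => i; rewrite !inE !mxE subr_eq0. Qed.

Lemma row_supp_sum (w : 'rV[F]_n) : w = \sum_(i in row_supp w) w 0 i *: 'e_i.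
Proof.
rewrite {1}(row_sum_delta w) [RHS]big_mkcond /=; apply: eq_bigr => i _.
by rewrite inE; case: (w 0 i =P 0) => [->|]; rewrite ?scale0r.
Qed.

End HammingWeight.

Section LinearMap.
Variables (F : finFieldType) (V : vectType F) (n : nat).
Variable phi : {linear 'rV[F]_n -> V}.

Definition basis_line (i : 'I_n) : {vspace V} := <[phi 'e_i]>%VS.

Definition span_lines (S : {set 'I_n}) : {vspace V} := (\sum_(i in S) basis_line i)%VS.

Lemma linear_row_supp (w : 'rV[F]_n) :
  phi w = \sum_(i in row_supp w) w 0 i *: phi 'e_i.
Proof.
by rewrite {1}(row_supp_sum w) linear_sum; apply: eq_bigr => i _; rewrite linearZ.
Qed.

Lemma wt_quotE (x : V) :
  wt_quot phi x = min_opt (fun S => x \in span_lines S) (fun S => #|S|).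
Proof.
apply: min_opt_eq => [w /eqP <-|S /memv_sumP[vs vsS ->]].
  exists (row_supp w) => //; rewrite linear_row_supp; apply: memv_sumr => i _.
  by rewrite memvZ ?memv_line.
have /fin_all_exists[k vsE] :
    forall i, exists k : F, i \in S -> vs i = k *: phi 'e_i.
  move=> i; case: (boolP (i \in S)) => [/vsS/vlineP[k ->]|_]; last by exists 0.
  by exists k.
exists (\sum_(i in S) k i *: 'e_i).
  by rewrite linear_sum; apply/eqP/eq_bigr => i iS; rewrite linearZ vsE.
apply: subset_leq_card; apply/subsetP => j; rewrite inE; apply: contraR => jS.
rewrite summxE big1 // => i iS; rewrite !mxE eqxx /=.
by case: eqP => [ji|]; [rewrite ji iS in jS | rewrite mulr0].
Qed.

Hypotheses (phi_e_neq0 : forall i, phi 'e_i != 0)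
           (basis_line_inj : injective basis_line).

Lemma kernel_hamming_wt_ge3 (w : 'rV[F]_n) :
  phi w = 0 -> w != 0 -> (3 <= hamming_wt w)%N.
Proof.
rewrite linear_row_supp => phi_sum w0.
have wi_neq0 i : i \in row_supp w -> w 0 i != 0 by rewrite inE.
rewrite hamming_wtE leqNgt; apply/negP.
case E: #|row_supp w| => [|[|[|//]]] _.
- by move: w0; rewrite (row_supp_sum w) (cards0_eq E) big_set0 eqxx.
- move/eqP: E => /cards1P[i suppE].
  move: phi_sum; rewrite suppE big_set1 => /eqP.
  rewrite scaler_eq0 (negbTE (phi_e_neq0 i)) orbF.
  by apply/negP/wi_neq0; rewrite suppE set11.
- move/eqP: E => /cards2P[i [j [ij suppE]]].
  move: phi_sum; rewrite suppE big_setU1 ?inE //= big_set1.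
  move=> /(line_eq_of_lin_dep (wi_neq0 i _) (wi_neq0 j _)) lines_eq.
  by move: ij; rewrite (basis_line_inj (lines_eq _ _)) ?suppE ?set21 ?set22 ?eqxx.
Qed.

End LinearMap.

Section ParentFunction.
Variables (F : finFieldType) (V : vectType F) (fam : seq {vspace V}).
Variable phi : {linear 'rV[F]_(size fam) -> V}.
Hypotheses (fam_proj : proj_point_family fam) (phi_parent : parent_function fam phi).

Lemma nth_fam_inj : injective (fun j : 'I_(size fam) => nth 0%VS fam j).
Proof.
move=> j1 j2 /eqP; rewrite nth_uniq //; first by move/eqP/val_inj.
by case/andP: fam_proj.
Qed.

Lemma parent_perm : exists s : {perm 'I_(size fam)},
  forall j : 'I_(size fam), nth 0%VS fam j = basis_line phi (s j).
Proof.
have /fin_all_exists[s sE] (j : 'I_(size fam)) :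
    exists i, nth 0%VS fam j = basis_line phi i.
  exact/phi_parent/mem_nth.
have s_inj : injective s by move=> j1 j2 sj; apply: nth_fam_inj; rewrite /= !sE sj.
by exists (perm s_inj) => j; rewrite permE.
Qed.

Lemma parent_basis_line_inj : injective (basis_line phi).
Proof.
have [s sE] := parent_perm; move=> i1 i2 lines_eq.
rewrite -(permKV s i1) -(permKV s i2) -!sE in lines_eq *.
by rewrite (nth_fam_inj lines_eq).
Qed.

Lemma parent_phi_e_neq0 i : phi 'e_i != 0.
Proof.
have /(allP (proj2 (andP fam_proj))) : basis_line phi i \in fam.
  by apply/phi_parent; exists i.
by rewrite dim_vline eqb1.
Qed.

Lemma wtF_span_lines (x : V) :
  wtF fam x = min_opt (fun S => x \in span_lines phi S) (fun S => #|S|).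
Proof.
have [s sE] := parent_perm.
have span_subE (S : {set 'I_(size fam)}) : span_sub S = span_lines phi (s @: S).
  rewrite /span_lines big_imset /=; last exact: in2W perm_inj.
  by apply: eq_bigr => j _; rewrite sE.
apply: min_opt_eq => [S xS|S xS].
  by exists (s @: S); rewrite -?span_subE ?card_imset //; apply: perm_inj.
exists (s^-1 @: S)%g; last by rewrite card_imset //; apply: perm_inj.
by rewrite span_subE -imset_comp (eq_imset _ (permKV s)) imset_id.
Qed.

End ParentFunction.

Theorem proposition4p1 (F : finFieldType) (V : vectType F) (nu : nat)
  (fam : seq {vspace V}) (phi : {linear 'rV[F]_nu -> V}) :
  proj_point_family fam -> size fam = nu -> parent_function fam phi ->
  (forall x : V, wtF fam x = wt_quot phi x) /\
  (forall x y : 'rV[F]_nu, phi x = 0 -> phi y = 0 -> x != y ->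
     (3 <= hamming_dist x y)%N).
Proof.
move=> fam_proj size_fam phi_parent; subst nu; split=> [x|x y phix phiy].
  by rewrite wt_quotE (wtF_span_lines fam_proj phi_parent).
rewrite -subr_eq0 hamming_distE; apply: kernel_hamming_wt_ge3.
- exact: parent_phi_e_neq0 fam_proj phi_parent.
- exact: parent_basis_line_inj fam_proj phi_parent.
- by rewrite linearB /= phix phiy subrr.
Qed.
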